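(* For $\mu_1,\mu_2\in\mathbb{C}$, the function $$\phi^B_{\mu_1,\mu_2}=\Big[\prod_{r=1}^n(z_r^{1/2}-z_r^{-1/2})^{\mu_1}\Big]\prod_{1\le i<j\le n}(z_i+z_i^{-1}-z_j-z_j^{-1})^{\mu_2}$$ (on any domain where the factors are nonzero and branches are fixed) satisfies $$\sum_{r=1}^n(z_r\partial_{z_r})^2(\phi^B_{\mu_1,\mu_2})+\Big[\mu_1(1-\mu_1)\sum_{r=1}^n\frac{z_r}{(z_r-1)^2}+2\mu_2(1-\mu_2)\Big(\sum_{1\le i<j\le n}\frac{z_iz_j}{(z_i-z_j)^2}+\sum_{1\le i<j\le n}\frac{z_iz_j}{(z_iz_j-1)^2}\Big)\Big]\phi^B_{\mu_1,\mu_2}$$ $$=\Big(\frac{n\mu_1^2}{4}+\frac{n(n-1)}{2}\mu_1\mu_2+\frac{n(n-1)(2n-1)\mu_2^2}{6}\Big)\phi^B_{\mu_1,\mu_2}.$$ *)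

From Stdlib Require Import Reals List Arith ClassicalEpsilon.
From Coquelicot Require Import Coquelicot.
Open Scope C_scope.

Definition cexp (z : C) : C :=
  (exp (fst z) * cos (snd z), exp (fst z) * sin (snd z))%R.

(* points of C^n are represented by functions nat -> C; coordinates >= n are
   irrelevant *)
Definition upd (z : nat -> C) (r : nat) (w : C) : nat -> C :=
  fun k => if Nat.eqb k r then w else z k.

Definition pdiff (f : (nat -> C) -> C) (r : nat) (z : nat -> C) : Prop :=
  exists d : C, is_derive (fun w : C => f (upd z r w)) (z r) d.

(* the partial derivative d f / d z_r at z (meaningful when pdiff f r z) *)
Definition pderiv (f : (nat -> C) -> C) (r : nat) (z : nat -> C) : C :=
  epsilon (inhabits (RtoC 0))
    (fun d : C => is_derive (fun w : C => f (upd z r w)) (z r) d).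

Definition euler (r : nat) (f : (nat -> C) -> C) : (nat -> C) -> C :=
  fun z => z r * pderiv f r z.

Definition csum (n : nat) (f : nat -> C) : C :=
  fold_right Cplus (RtoC 0) (map f (seq 0 n)).

Definition csum2 (n : nat) (f : nat -> nat -> C) : C :=
  csum n (fun j => csum j (fun i => f i j)).

(* U is open in each coordinate direction z_r, r < n (every open subset of
   C^n has this property) *)
Definition coord_open (n : nat) (U : (nat -> C) -> Prop) : Prop :=
  forall z, U z -> forall r, (r < n)%nat ->
    locally (z r) (fun w : C => U (upd z r w)).

(* the function phi^B with branches fixed by logarithms l r (of
   z_r^{1/2} - z_r^{-1/2}) and m i j (of z_i + z_i^{-1} - z_j - z_j^{-1}):
   w^mu := exp (mu * log w) *)
Definition phiB (n : nat) (mu1 mu2 : C)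
  (l : nat -> (nat -> C) -> C) (m : nat -> nat -> (nat -> C) -> C)
  : (nat -> C) -> C :=
  fun z => cexp (mu1 * csum n (fun r => l r z)
                 + mu2 * csum2 n (fun i j => m i j z)).

(* Write [phi = exp Lambda] with [Lambda = mu1 sum_r l_r + mu2 sum_(i<j) m_ij], and put
   [x_r = z_r + 1/z_r], [w_r = z_r - 1/z_r].  Differentiating the defining relations
   [exp (2 l_r) = x_r - 2] and [exp m_ij = x_i - x_j] shows that [z_r d/dz_r Lambda] is
   [a_r = mu1 (z_r + 1)/(2 (z_r - 1)) + mu2 sum_(j <> r) w_r/(x_r - x_j)], so that
   [(z_r d/dz_r)^2 phi = (a_r^2 + z_r d/dz_r a_r) phi].  The claim is then a rational
   identity.  Expanding [sum_r a_r^2], the diagonal terms give [n mu1^2/4]; the terms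
   attached to a pair {i, j} give [n(n-1)/2 (mu1 mu2 + mu2^2)] once combined with the
   potential; and those attached to a triple {a, b, c} give [n(n-1)(n-2)/3 mu2^2],
   because the symmetrisation of [w_a^2/((x_a - x_b)(x_a - x_c))] is the Lagrange
   interpolation sum of [X^2 - 4 = w^2] at three nodes, which equals 1. *)

From Stdlib Require Import Reals List Lra Lia Psatz ClassicalEpsilon FunctionalExtensionality.
From Coquelicot Require Import Coquelicot.
Open Scope C_scope.

(** * Finite sums *)

Lemma csum_S n (f : nat -> C) : csum (S n) f = csum n f + f n.
Proof.
  unfold csum. rewrite seq_S, map_app, fold_right_app. simpl.
  generalize (map f (seq 0 n)). intros l.
  induction l as [|x l IH]; simpl; [ring | rewrite IH; ring].
Qed.

Lemma csum_ext n (f g : nat -> C) : (forall k, (k < n)%nat -> f k = g k) -> csum n f = csum n g.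
Proof.
  induction n as [|n IH]; intros H; [reflexivity|].
  rewrite !csum_S, (H n) by lia. f_equal. apply IH. intros; apply H; lia.
Qed.

Lemma csum_add n (f g : nat -> C) : csum n (fun k => f k + g k) = csum n f + csum n g.
Proof. induction n as [|n IH]; [unfold csum; simpl; ring | rewrite !csum_S, IH; ring]. Qed.

Lemma csum_scal_l n c (f : nat -> C) : csum n (fun k => c * f k) = c * csum n f.
Proof. induction n as [|n IH]; [unfold csum; simpl; ring | rewrite !csum_S, IH; ring]. Qed.

Lemma csum_scal_r n c (f : nat -> C) : csum n (fun k => f k * c) = csum n f * c.
Proof. induction n as [|n IH]; [unfold csum; simpl; ring | rewrite !csum_S, IH; ring]. Qed.

Lemma csum_const n (c : C) : csum n (fun _ => c) = INR n * c.
Proof.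
  induction n as [|n IH]; [unfold csum; simpl; ring|].
  rewrite csum_S, IH, S_INR, RtoC_plus. ring.
Qed.

Lemma csum_zero n (f : nat -> C) : (forall k, (k < n)%nat -> f k = 0) -> csum n f = 0.
Proof. intros H. rewrite (csum_ext n f (fun _ => 0)) by exact H. rewrite csum_const. ring. Qed.

Lemma csum_INR n : csum n (fun k => RtoC (INR k)) = INR n * (INR n - 1) / 2.
Proof.
  induction n as [|n IH]; [unfold csum; simpl; field|].
  rewrite csum_S, IH, S_INR, RtoC_plus. field.
Qed.

Lemma csum_delta n j (c : C) : (j < n)%nat ->
  csum n (fun k => if Nat.eqb k j then c else 0) = c.
Proof.
  induction n as [|n IH]; intros Hj; [lia|].
  rewrite csum_S. destruct (Nat.eqb_spec n j) as [->|Hne].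
  - rewrite csum_zero; [ring|]. intros k Hk. destruct (Nat.eqb_spec k j); [lia|reflexivity].
  - rewrite IH by lia. ring.
Qed.

Lemma csum2_ext n (f g : nat -> nat -> C) :
  (forall i j, (i < j)%nat -> (j < n)%nat -> f i j = g i j) -> csum2 n f = csum2 n g.
Proof. intros H. apply csum_ext. intros j Hj. apply csum_ext. intros i Hi. apply H; lia. Qed.

Lemma csum2_add n (f g : nat -> nat -> C) :
  csum2 n (fun i j => f i j + g i j) = csum2 n f + csum2 n g.
Proof. unfold csum2. rewrite <- csum_add. apply csum_ext. intros. apply csum_add. Qed.

Lemma csum2_scal_l n c (f : nat -> nat -> C) :
  csum2 n (fun i j => c * f i j) = c * csum2 n f.
Proof. unfold csum2. rewrite <- csum_scal_l. apply csum_ext. intros. apply csum_scal_l. Qed.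

Lemma csum2_const n (c : C) : csum2 n (fun _ _ => c) = INR n * (INR n - 1) / 2 * c.
Proof.
  unfold csum2. rewrite (csum_ext n _ (fun k => c * INR k)).
  - rewrite csum_scal_l, csum_INR. field.
  - intros. rewrite csum_const. ring.
Qed.

Lemma csum_square_split n (F : nat -> nat -> C) :
  csum n (fun a => csum n (fun b => F a b)) =
  csum n (fun a => F a a) + csum2 n (fun i j => F i j + F j i).
Proof.
  induction n as [|n IH]; [unfold csum2, csum; simpl; ring|].
  unfold csum2 in *. rewrite !csum_S.
  rewrite (csum_ext n (fun a => csum (S n) (fun b => F a b))
             (fun a => csum n (fun b => F a b) + F a n)) by (intros; apply csum_S).
  rewrite csum_add, IH, csum_add. change (csum n (F n)) with (csum n (fun b => F n b)). ring.
Qed.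

Lemma csum_cube_sym n (H : nat -> nat -> nat -> C) (c : C) :
  (forall a b d, (a < n)%nat -> (b < n)%nat -> (d < n)%nat ->
     (a = b \/ b = d \/ a = d) -> H a b d = 0) ->
  (forall a b d, (a < n)%nat -> (b < n)%nat -> (d < n)%nat ->
     a <> b -> b <> d -> a <> d ->
     H a b d + H a d b + H b a d + H b d a + H d a b + H d b a = c) ->
  csum n (fun a => csum n (fun b => csum n (fun d => H a b d))) =
  INR n * (INR n - 1) * (INR n - 2) / 6 * c.
Proof.
  induction n as [|n IH]; intros H0 Hsym; [unfold csum; simpl; field|].
  assert (Hrow : forall a, (a < n)%nat ->
      csum (S n) (fun b => csum (S n) (fun d => H a b d)) =
      csum n (fun b => csum n (fun d => H a b d)) +
      (csum n (fun b => H a b n) + csum n (fun d => H a n d))).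
  { intros a Ha. rewrite csum_S.
    rewrite (csum_ext n _ (fun b => csum n (fun d => H a b d) + H a b n))
      by (intros; apply csum_S).
    rewrite csum_add, csum_S, (H0 a n n) by lia. ring. }
  assert (Hlast : csum (S n) (fun b => csum (S n) (fun d => H n b d)) =
                  csum n (fun b => csum n (fun d => H n b d))).
  { rewrite csum_S, (csum_ext n _ (fun b => csum n (fun d => H n b d))).
    - rewrite csum_S, (csum_zero n (fun d => H n n d)), (H0 n n n); [ring|lia..|].
      intros; apply H0; lia.
    - intros b Hb. rewrite csum_S, (H0 n b n) by lia. ring. }
  rewrite csum_S, Hlast, (csum_ext n _ _ Hrow), csum_add, IH
    by (intros; apply H0 || apply Hsym; auto).
  assert (Hnew : csum n (fun a => csum n (fun b => H a b n) + csum n (fun d => H a n d))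
      + csum n (fun b => csum n (fun d => H n b d)) =
      csum n (fun a => csum n (fun b => H a b n + H a n b + H n a b))).
  { rewrite <- csum_add. apply csum_ext. intros. rewrite <- !csum_add. reflexivity. }
  rewrite <- Cplus_assoc, Hnew, csum_square_split, csum_zero, (csum2_ext n _ (fun _ _ => c)).
  - rewrite csum2_const, S_INR, RtoC_plus. field.
  - intros i j Hij Hj. rewrite <- (Hsym i j n) by lia. ring.
  - intros a Ha. rewrite !H0 by lia. ring.
Qed.

(** * The complex exponential *)

Lemma Rabs_exp_sub1 a : (Rabs a <= 1 -> Rabs (exp a - 1) <= 3 * Rabs a)%R.
Proof.
  intros Ha.
  destruct (MVT_abs exp exp 0 a) as [c [Hc Hca]]; [intros; apply derivable_pt_lim_exp|].
  rewrite exp_0, Rminus_0_r in Hc. rewrite Hc, (Rabs_pos_eq (exp c)) by (left; apply exp_pos).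
  apply Rmult_le_compat_r; [apply Rabs_pos|].
  apply Rle_trans with (exp 1); [|apply exp_le_3].
  assert (c <= 1)%R.
  { apply Rle_trans with (1 := proj2 Hca). apply Rabs_le_between in Ha. apply Rmax_lub; lra. }
  destruct (Rle_lt_or_eq_dec c 1) as [Hlt| ->]; [auto|left; apply exp_increasing|]; lra.
Qed.

Lemma Rabs_le_of_between a c : (Rmin 0 a <= c <= Rmax 0 a -> Rabs c <= Rabs a)%R.
Proof.
  unfold Rmin, Rmax. intros [H1 H2]. destruct (Rle_dec 0 a); unfold Rabs;
  repeat destruct Rcase_abs; lra.
Qed.

Lemma sqr_Rabs a : (a * a = Rabs a * Rabs a)%R.
Proof. rewrite <- Rabs_mult. symmetry. apply Rabs_pos_eq. nra. Qed.

Lemma Rabs_exp_taylor1 a : (Rabs a <= 1 -> Rabs (exp a - 1 - a) <= 3 * (a * a))%R.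
Proof.
  intros Ha.
  destruct (MVT_abs (fun t => exp t - 1 - t)%R (fun t => exp t - 1)%R 0 a) as [c [Hc Hca]].
  { intros c _. apply is_derive_Reals. auto_derive; auto. ring. }
  rewrite exp_0 in Hc. replace (exp a - 1 - a - (1 - 1 - 0))%R with (exp a - 1 - a)%R in Hc by ring.
  rewrite Hc, Rminus_0_r.
  pose proof (Rabs_le_of_between a c Hca). pose proof (Rabs_exp_sub1 c ltac:(lra)).
  pose proof (Rabs_pos (exp c - 1)). pose proof (Rabs_pos a). pose proof (sqr_Rabs a).
  nra.
Qed.

Lemma Rabs_sin_le b : (Rabs (sin b) <= Rabs b)%R.
Proof.
  destruct (MVT_abs sin cos 0 b) as [c [Hc _]]; [intros; apply derivable_pt_lim_sin|].
  rewrite sin_0, !Rminus_0_r in Hc. rewrite Hc.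
  pose proof (Rabs_pos b). assert (Rabs (cos c) <= 1)%R by (apply Rabs_le; apply COS_bound).
  nra.
Qed.

Lemma Rabs_cos_sub1 b : (Rabs (cos b - 1) <= b * b)%R.
Proof.
  destruct (MVT_abs cos (fun t => - sin t)%R 0 b) as [c [Hc Hcb]];
    [intros; apply derivable_pt_lim_cos|].
  rewrite cos_0, Rminus_0_r in Hc. rewrite Hc, Rabs_Ropp.
  pose proof (Rabs_le_of_between b c Hcb). pose proof (Rabs_sin_le c).
  pose proof (Rabs_pos b). pose proof (Rabs_pos (sin c)). pose proof (sqr_Rabs b).
  nra.
Qed.

Lemma Rabs_sin_taylor1 b : (Rabs b <= 1 -> Rabs (sin b - b) <= b * b)%R.
Proof.
  intros Hb.
  destruct (MVT_abs (fun t => sin t - t)%R (fun t => cos t - 1)%R 0 b) as [c [Hc Hcb]].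
  { intros c _. apply is_derive_Reals. auto_derive; auto. ring. }
  rewrite sin_0 in Hc. replace (sin b - b - (0 - 0))%R with (sin b - b)%R in Hc by ring.
  rewrite Hc, Rminus_0_r.
  pose proof (Rabs_le_of_between b c Hcb). pose proof (Rabs_cos_sub1 c).
  pose proof (Rabs_pos b). pose proof (Rabs_pos c). pose proof (sqr_Rabs b).
  pose proof (sqr_Rabs c). pose proof (Rabs_pos (cos c - 1)).
  nra.
Qed.

Lemma Cmod_le_Rabs_sum (a b : R) : (Cmod (a, b) <= Rabs a + Rabs b)%R.
Proof.
  unfold Cmod. simpl. pose proof (Rabs_pos a). pose proof (Rabs_pos b).
  rewrite <- (sqrt_square (Rabs a + Rabs b)) by lra.
  apply sqrt_le_1_alt. pose proof (sqr_Rabs a). pose proof (sqr_Rabs b). nra.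
Qed.

Lemma cexp_add x y : cexp (x + y) = cexp x * cexp y.
Proof.
  destruct x as [a b], y as [c d]. unfold cexp, Cmult, Cplus. simpl.
  rewrite exp_plus, cos_plus, sin_plus. f_equal; ring.
Qed.

Lemma cexp_0 : cexp 0 = 1.
Proof. unfold cexp, RtoC. simpl. rewrite exp_0, cos_0, sin_0. f_equal; ring. Qed.

Lemma cexp_neq0 x : cexp x <> 0.
Proof.
  intros H. apply C1_nz. rewrite <- cexp_0, <- (Cplus_opp_r x) at 1. rewrite cexp_add, H.
  apply Cmult_0_l.
Qed.

Lemma cexp_taylor1 h : (Cmod h < 1)%R -> (Cmod (cexp h - 1 - h) <= 6 * (Cmod h * Cmod h))%R.
Proof.
  intros Hh. destruct h as [a b].
  pose proof (Rmax_Cmod (a, b)) as Hm. simpl in Hm.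
  assert (Ha : (Rabs a <= 1)%R) by (pose proof (Rmax_l (Rabs a) (Rabs b)); lra).
  assert (Hb : (Rabs b <= 1)%R) by (pose proof (Rmax_r (Rabs a) (Rabs b)); lra).
  replace (cexp (a, b) - 1 - (a, b)) with
    (((exp a - 1 - a) * cos b + (1 + a) * (cos b - 1))%R,
     ((exp a - 1) * sin b + (sin b - b))%R)
    by (unfold cexp, Cminus, Cplus, Copp; simpl; f_equal; ring).
  replace (Cmod (a, b) * Cmod (a, b))%R with (a * a + b * b)%R
    by (pose proof (Cmod2_alt (a, b)) as E; simpl in E; rewrite !Rmult_1_r in E; symmetry; exact E).
  eapply Rle_trans; [apply Cmod_le_Rabs_sum|].
  pose proof (Rabs_triang ((exp a - 1 - a) * cos b) ((1 + a) * (cos b - 1))).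
  pose proof (Rabs_triang ((exp a - 1) * sin b) (sin b - b)).
  rewrite !Rabs_mult in *.
  pose proof (Rabs_exp_sub1 a Ha). pose proof (Rabs_exp_taylor1 a Ha).
  pose proof (Rabs_cos_sub1 b). pose proof (Rabs_sin_taylor1 b Hb). pose proof (Rabs_sin_le b).
  assert (Rabs (cos b) <= 1)%R by (apply Rabs_le; apply COS_bound).
  assert (Rabs (1 + a) <= 2)%R by (apply Rabs_le_between in Ha; apply Rabs_le; lra).
  pose proof (Rabs_pos (exp a - 1 - a)). pose proof (Rabs_pos (cos b - 1)).
  pose proof (Rabs_pos (exp a - 1)). pose proof (Rabs_pos (sin b)). pose proof (Rabs_pos (cos b)).
  pose proof (Rabs_pos a). pose proof (Rabs_pos b).
  pose proof (sqr_Rabs a). pose proof (sqr_Rabs b).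
  assert (Rabs (exp a - 1 - a) * Rabs (cos b) <= 3 * (a * a))%R by nra.
  assert (Rabs (1 + a) * Rabs (cos b - 1) <= 2 * (b * b))%R by nra.
  assert (Rabs (exp a - 1) * Rabs (sin b) <= 3 * (Rabs a * Rabs b))%R by nra.
  nra.
Qed.

(** * Complex differentiation *)

Lemma is_derive_of_quadratic_remainder (f : C -> C) (x l : C) (d K : R) :
  (0 < d)%R -> (0 <= K)%R ->
  (forall y, (Cmod (y - x) < d)%R ->
     (Cmod (f y - f x - (y - x) * l) <= K * (Cmod (y - x) * Cmod (y - x)))%R) ->
  is_derive f x l.
Proof.
  intros Hd HK Hb. split; [apply is_linear_scal_l|].
  intros x' Hx'.
  apply (@is_filter_lim_locally_unique C_AbsRing (AbsRing_NormedModule C_AbsRing)) in Hx'.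
  subst x'. intros eps.
  set (r := Rmin d (eps / (K + 1))).
  assert (Hr : (0 < r)%R).
  { apply Rmin_pos; [exact Hd|]. apply Rdiv_lt_0_compat; [apply cond_pos|lra]. }
  exists (mkposreal _ Hr). intros y Hy.
  change (Cmod (y - x) < r)%R in Hy.
  change (Cmod (f y - f x - (y - x) * l) <= eps * Cmod (y - x))%R.
  pose proof (Rmin_l d (eps / (K + 1))) as Hrd. pose proof (Rmin_r d (eps / (K + 1))) as Hre.
  fold r in Hrd, Hre.
  assert (Hyd : (Cmod (y - x) < d)%R) by lra.
  assert (Hye : (Cmod (y - x) * (K + 1) < eps)%R).
  { apply Rlt_le_trans with (eps / (K + 1) * (K + 1))%R; [apply Rmult_lt_compat_r; lra|].
    right. field. lra. }
  specialize (Hb y Hyd). pose proof (Cmod_ge_0 (y - x)). nra.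
Qed.

Lemma is_derive_cexp x : is_derive cexp x (cexp x).
Proof.
  apply (is_derive_of_quadratic_remainder _ _ _ 1 (6 * Cmod (cexp x)));
    [lra | pose proof (Cmod_ge_0 (cexp x)); lra |].
  intros y Hy.
  assert (Ey : cexp y = cexp x * cexp (y - x)) by (rewrite <- cexp_add; f_equal; ring).
  replace (cexp y - cexp x - (y - x) * cexp x) with (cexp x * (cexp (y - x) - 1 - (y - x)))
    by (rewrite Ey; ring).
  rewrite Cmod_mult. pose proof (cexp_taylor1 (y - x) Hy). pose proof (Cmod_ge_0 (cexp x)).
  nra.
Qed.

Lemma is_derive_Cinv (x : C) : x <> 0 -> is_derive Cinv x (- / (x * x)).
Proof.
  intros Hx. pose proof (proj1 (Cmod_gt_0 x) Hx) as Hx0.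
  apply (is_derive_of_quadratic_remainder _ _ _ (Cmod x / 2) (2 / (Cmod x * Cmod x * Cmod x)));
    [lra | apply Rlt_le, Rdiv_lt_0_compat; [lra | apply Rmult_lt_0_compat; nra] |].
  intros y Hy.
  assert (Hxy : (Cmod x <= Cmod y + Cmod (y - x))%R).
  { replace x with (y + - (y - x)) at 1 by ring.
    eapply Rle_trans; [apply Cmod_triangle|]. rewrite Cmod_opp. lra. }
  assert (Hy0 : y <> 0) by (intros ->; rewrite Cmod_0 in Hxy; lra).
  pose proof (proj1 (Cmod_gt_0 y) Hy0).
  replace (/ y - / x - (y - x) * - / (x * x)) with ((y - x) * (y - x) / (x * x * y))
    by (field; auto).
  rewrite Cmod_div by (repeat apply Cmult_neq_0; auto).
  rewrite !Cmod_mult.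
  assert (Hinv : (/ (Cmod x * Cmod x * Cmod y) <= 2 / (Cmod x * Cmod x * Cmod x))%R).
  { replace (2 / (Cmod x * Cmod x * Cmod x))%R with (/ (Cmod x * Cmod x * (Cmod x / 2)))%R
      by (field; lra).
    apply Rinv_le_contravar; [apply Rmult_lt_0_compat; nra|].
    apply Rmult_le_compat_l; nra. }
  pose proof (Cmod_ge_0 (y - x)). unfold Rdiv at 1. nra.
Qed.

(* Coquelicot's derivative lemmas for ring-valued functions live over
   [AbsRing_NormedModule C_AbsRing], while [C]-valued derivatives are taken in
   [C_NormedModule]; the two structures have the same filters. *)
Lemma is_derive_C_of_AbsRing (f : C -> C) (x l : C) :
  @is_derive C_AbsRing (AbsRing_NormedModule C_AbsRing) f x l ->
  @is_derive C_AbsRing C_NormedModule f x l.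
Proof. intros [_ H]. split; [apply is_linear_scal_l | exact H]. Qed.

Lemma is_derive_AbsRing_of_C (f : C -> C) (x l : C) :
  @is_derive C_AbsRing C_NormedModule f x l ->
  @is_derive C_AbsRing (AbsRing_NormedModule C_AbsRing) f x l.
Proof. intros [_ H]. split; [apply is_linear_scal_l | exact H]. Qed.

Lemma Cderive_eq (f : C -> C) (x a b : C) : is_derive f x a -> a = b -> is_derive f x b.
Proof. intros H <-. exact H. Qed.

Lemma Cderive_unique (f : C -> C) x a b : is_derive f x a -> is_derive f x b -> a = b.
Proof. intros Ha Hb. rewrite <- (is_C_derive_unique f x a Ha). apply is_C_derive_unique, Hb. Qed.

Lemma Cderive_ext (f g : C -> C) x a : (forall w, f w = g w) -> is_derive f x a -> is_derive g x a.
Proof. intros E H. exact (is_derive_ext f g x a E H). Qed.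

Lemma Cderive_ext_loc (f g : C -> C) x a :
  locally x (fun w => f w = g w) -> is_derive f x a -> is_derive g x a.
Proof. intros E H. apply (is_derive_ext_loc f g x a); [apply locally_C; exact E | exact H]. Qed.

Lemma Cderive_const (c x : C) : is_derive (fun _ : C => c) x (RtoC 0).
Proof. exact (is_derive_const c x). Qed.

Lemma Cderive_id (x : C) : is_derive (fun w : C => w) x (RtoC 1).
Proof. apply is_derive_C_of_AbsRing. exact (is_derive_id x). Qed.

Lemma Cderive_plus (f g : C -> C) x a b : is_derive f x a -> is_derive g x b ->
  is_derive (fun w => f w + g w) x (a + b).
Proof. intros Ha Hb. exact (is_derive_plus f g x a b Ha Hb). Qed.

Lemma Cderive_minus (f g : C -> C) x a b : is_derive f x a -> is_derive g x b ->
  is_derive (fun w => f w - g w) x (a - b).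
Proof. intros Ha Hb. exact (is_derive_minus f g x a b Ha Hb). Qed.

Lemma Cderive_mult (f g : C -> C) x a b : is_derive f x a -> is_derive g x b ->
  is_derive (fun w => f w * g w) x (a * g x + f x * b).
Proof.
  intros Ha Hb. apply is_derive_C_of_AbsRing.
  exact (is_derive_mult f g x a b (is_derive_AbsRing_of_C _ _ _ Ha)
           (is_derive_AbsRing_of_C _ _ _ Hb) Cmult_comm).
Qed.

Lemma Cderive_scal (c : C) (f : C -> C) x a : is_derive f x a ->
  is_derive (fun w => c * f w) x (c * a).
Proof.
  intros H. eapply Cderive_eq.
  - apply (Cderive_mult (fun _ => c) f); [apply Cderive_const | exact H].
  - ring.
Qed.

Lemma Cderive_comp (f g : C -> C) x a b : is_derive f (g x) a -> is_derive g x b ->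
  is_derive (fun w => f (g w)) x (b * a).
Proof. intros Ha Hb. exact (is_derive_comp f g x a b Ha (is_derive_AbsRing_of_C _ _ _ Hb)). Qed.

Lemma Cderive_cexp_comp (f : C -> C) x a : is_derive f x a ->
  is_derive (fun w => cexp (f w)) x (a * cexp (f x)).
Proof. intros H. apply (Cderive_comp cexp f x); [apply is_derive_cexp | exact H]. Qed.

Lemma Cderive_inv_comp (f : C -> C) x a : is_derive f x a -> f x <> 0 ->
  is_derive (fun w => / f w) x (- a / (f x * f x)).
Proof.
  intros H Hf.
  replace (- a / (f x * f x)) with (a * - / (f x * f x)) by (field; exact Hf).
  apply (Cderive_comp Cinv f x); [apply is_derive_Cinv, Hf | exact H].
Qed.

Lemma Cderive_csum n (F : nat -> C -> C) x (d : nat -> C) :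
  (forall k, (k < n)%nat -> is_derive (F k) x (d k)) ->
  is_derive (fun w => csum n (fun k => F k w)) x (csum n d).
Proof.
  induction n as [|n IH]; intros H; [exact (Cderive_const 0 x)|].
  apply (Cderive_ext (fun w => csum n (fun k => F k w) + F n w)); [intros; symmetry; apply csum_S|].
  rewrite csum_S. apply Cderive_plus; [apply IH; intros; apply H|apply H]; lia.
Qed.

Lemma Cderive_csum2 n (F : nat -> nat -> C -> C) x (d : nat -> nat -> C) :
  (forall i j, (i < j)%nat -> (j < n)%nat -> is_derive (F i j) x (d i j)) ->
  is_derive (fun w => csum2 n (fun i j => F i j w)) x (csum2 n d).
Proof.
  intros H. apply (Cderive_csum n (fun j w => csum j (fun i => F i j w))).
  intros j Hj. apply (Cderive_csum j (fun i w => F i j w)). intros i Hi. apply H; lia.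
Qed.

Lemma Cderive_of_cexp_eq (f g : C -> C) (x df dg : C) :
  is_derive f x df -> is_derive g x dg -> locally x (fun w => cexp (f w) = g w) ->
  df * g x = dg.
Proof.
  intros Hf Hg Hloc. rewrite <- (locally_singleton _ _ Hloc).
  apply (Cderive_unique g x); [|exact Hg].
  apply (Cderive_ext_loc _ _ _ _ Hloc), Cderive_cexp_comp, Hf.
Qed.

(** * The rational identity *)

Definition kron (k r : nat) : C := if Nat.eqb k r then 1 else 0.

Lemma csum_kron n r (f : nat -> C) : (r < n)%nat -> csum n (fun k => kron r k * f k) = f r.
Proof.
  intros Hr. rewrite <- (csum_delta n r (f r) Hr). apply csum_ext. intros k _.
  unfold kron. destruct (Nat.eqb_spec r k), (Nat.eqb_spec k r); subst; try lia; ring.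
Qed.

Lemma csum_mul_csum n (f : nat -> C) :
  csum n f * csum n f =
  csum n (fun j => f j * f j) +
  csum n (fun j => csum n (fun k => if Nat.eqb k j then 0 else f j * f k)).
Proof.
  rewrite <- csum_scal_r, <- csum_add. apply csum_ext. intros j Hj.
  rewrite <- csum_scal_l.
  rewrite <- (csum_delta n j (f j * f j) Hj), <- csum_add. apply csum_ext. intros k _.
  destruct (Nat.eqb_spec k j) as [->|]; ring.
Qed.

(* [xs z i = x_i] and [ws z i = w_i]: the Euler operator [z_i d/dz_i] maps
   [x_i] to [w_i] and [w_i] to [x_i], and [w_i^2 = x_i^2 - 4]. *)
Definition xs (z : nat -> C) i := z i + / z i.
Definition ws (z : nat -> C) i := z i - / z i.

Definition ccoef (z : nat -> C) r := (z r + 1) / (2 * (z r - 1)).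
Definition tcoef (z : nat -> C) r j :=
  if Nat.eqb j r then RtoC 0 else ws z r / (xs z r - xs z j).
Definition ucoef (z : nat -> C) r j :=
  if Nat.eqb j r then RtoC 0
  else xs z r / (xs z r - xs z j) - ws z r * ws z r / ((xs z r - xs z j) * (xs z r - xs z j)).

(* [acoef z r = z_r d/dz_r (log phi^B)] and [bcoef z r = z_r d/dz_r (acoef z r)]. *)
Definition acoef n mu1 mu2 (z : nat -> C) r := mu1 * ccoef z r + mu2 * csum n (tcoef z r).
Definition bcoef n mu1 mu2 (z : nat -> C) r :=
  - mu1 * (z r / ((z r - 1) * (z r - 1))) + mu2 * csum n (ucoef z r).

Lemma tcoef_diag (z : nat -> C) r : tcoef z r r = 0.
Proof. unfold tcoef. rewrite Nat.eqb_refl. reflexivity. Qed.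

Lemma ucoef_diag (z : nat -> C) r : ucoef z r r = 0.
Proof. unfold ucoef. rewrite Nat.eqb_refl. reflexivity. Qed.

Lemma tcoef_off (z : nat -> C) r j : j <> r -> tcoef z r j = ws z r / (xs z r - xs z j).
Proof. intros H. unfold tcoef. destruct (Nat.eqb_spec j r); [lia | reflexivity]. Qed.

Lemma ucoef_off (z : nat -> C) r j : j <> r -> ucoef z r j =
  xs z r / (xs z r - xs z j) - ws z r * ws z r / ((xs z r - xs z j) * (xs z r - xs z j)).
Proof. intros H. unfold ucoef. destruct (Nat.eqb_spec j r); [lia | reflexivity]. Qed.

Lemma Cminus_neq0_sym (a b : C) : a - b <> 0 -> b - a <> 0.
Proof. intros H E. apply H. replace (a - b) with (- (b - a)) by ring. rewrite E. ring. Qed.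

Lemma ws_sq (z : nat -> C) i : z i <> 0 -> ws z i * ws z i = xs z i * xs z i - 4.
Proof. intros. unfold ws, xs. field. assumption. Qed.

Lemma ccoef_sq_sub (z : nat -> C) r : z r - 1 <> 0 ->
  ccoef z r * ccoef z r - z r / ((z r - 1) * (z r - 1)) = / 4.
Proof. intros. unfold ccoef. field. assumption. Qed.

Lemma ccoef_tcoef_pair (z : nat -> C) i j : i <> j -> z i <> 0 -> z j <> 0 ->
  z i - 1 <> 0 -> z j - 1 <> 0 -> xs z i - xs z j <> 0 ->
  ccoef z i * tcoef z i j + ccoef z j * tcoef z j i = / 2.
Proof.
  intros Hij Hi Hj Hi1 Hj1 Hx. pose proof (Cminus_neq0_sym _ _ Hx).
  rewrite !tcoef_off by lia.
  assert (Ec : forall k, z k <> 0 -> z k - 1 <> 0 -> ccoef z k * ws z k = (xs z k + 2) / 2)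
    by (intros; unfold ccoef, ws, xs; field; auto).
  transitivity (ccoef z i * ws z i / (xs z i - xs z j) + ccoef z j * ws z j / (xs z j - xs z i));
    [unfold Cdiv; ring|].
  rewrite !Ec by assumption. field. repeat split; auto.
Qed.

Lemma pair_term_eq (z : nat -> C) i j : z i <> 0 -> z j <> 0 -> xs z i - xs z j <> 0 ->
  z i * z j / ((z i - z j) * (z i - z j)) + z i * z j / ((z i * z j - 1) * (z i * z j - 1))
  = ((xs z i * xs z i + xs z j * xs z j - 8) / ((xs z i - xs z j) * (xs z i - xs z j)) - 1) / 2.
Proof.
  intros Hi Hj Hx.
  assert (E : xs z i - xs z j = (z i - z j) * (z i * z j - 1) / (z i * z j))
    by (unfold xs; field; auto).
  assert (H1 : z i - z j <> 0) by (intros H; apply Hx; rewrite E, H; field; auto).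
  assert (H2 : z i * z j - 1 <> 0) by (intros H; apply Hx; rewrite E, H; field; auto).
  rewrite E. unfold xs. field. repeat split; auto.
Qed.

Lemma tcoef_pair mu (z : nat -> C) i j : i <> j -> z i <> 0 -> z j <> 0 -> xs z i - xs z j <> 0 ->
  mu * mu * (tcoef z i j * tcoef z i j + tcoef z j i * tcoef z j i)
  + mu * (ucoef z i j + ucoef z j i)
  + 2 * mu * (1 - mu) *
    (z i * z j / ((z i - z j) * (z i - z j))
     + z i * z j / ((z i * z j - 1) * (z i * z j - 1)))
  = mu * mu.
Proof.
  intros Hij Hi Hj Hx. pose proof (Cminus_neq0_sym _ _ Hx).
  rewrite pair_term_eq, !tcoef_off, !ucoef_off by (auto || lia).
  set (S := (xs z i * xs z i + xs z j * xs z j - 8) / ((xs z i - xs z j) * (xs z i - xs z j))).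
  assert (Et : ws z i / (xs z i - xs z j) * (ws z i / (xs z i - xs z j))
             + ws z j / (xs z j - xs z i) * (ws z j / (xs z j - xs z i)) = S).
  { transitivity ((ws z i * ws z i + ws z j * ws z j) / ((xs z i - xs z j) * (xs z i - xs z j)));
      [field; repeat split; auto|].
    rewrite !ws_sq by assumption. unfold S. f_equal. ring. }
  assert (Eu : xs z i / (xs z i - xs z j)
             - ws z i * ws z i / ((xs z i - xs z j) * (xs z i - xs z j))
             + (xs z j / (xs z j - xs z i)
                - ws z j * ws z j / ((xs z j - xs z i) * (xs z j - xs z i))) = 1 - S).
  { rewrite !ws_sq by assumption. unfold S. field. auto. }
  rewrite Et, Eu. field.
Qed.

(* Lagrange interpolation of [X^2 - 4 = W^2] at the three nodes [x_a, x_b, x_c]. *)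
Lemma tcoef_triple (z : nat -> C) a b c : a <> b -> b <> c -> a <> c ->
  z a <> 0 -> z b <> 0 -> z c <> 0 ->
  xs z a - xs z b <> 0 -> xs z b - xs z c <> 0 -> xs z a - xs z c <> 0 ->
  tcoef z a b * tcoef z a c + tcoef z a c * tcoef z a b
  + tcoef z b a * tcoef z b c + tcoef z b c * tcoef z b a
  + tcoef z c a * tcoef z c b + tcoef z c b * tcoef z c a = 2.
Proof.
  intros Hab Hbc Hac Ha Hb Hc H1 H2 H3.
  pose proof (Cminus_neq0_sym _ _ H1). pose proof (Cminus_neq0_sym _ _ H2).
  pose proof (Cminus_neq0_sym _ _ H3).
  rewrite !tcoef_off by lia.
  transitivity (2 * (ws z a * ws z a) / ((xs z a - xs z b) * (xs z a - xs z c))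
              + 2 * (ws z b * ws z b) / ((xs z b - xs z a) * (xs z b - xs z c))
              + 2 * (ws z c * ws z c) / ((xs z c - xs z a) * (xs z c - xs z b)));
    [field; repeat split; auto|].
  rewrite !ws_sq by assumption. field. repeat split; auto.
Qed.

Lemma Ceq_of_sub_eq (a b c d k : C) : c = d -> a - b = k * (c - d) -> a = b.
Proof. intros <- H. apply Ceq_minus. rewrite H. ring. Qed.

Section RationalIdentity.
Variables (n : nat) (z : nat -> C) (mu1 mu2 : C).
Hypothesis Hz0 : forall k, (k < n)%nat -> z k <> 0.
Hypothesis Hz1 : forall k, (k < n)%nat -> z k - 1 <> 0.
Hypothesis Hx : forall i j, (i < n)%nat -> (j < n)%nat -> i <> j -> xs z i - xs z j <> 0.

Lemma sum_ccoef_sq_sub :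
  csum n (fun r => ccoef z r * ccoef z r - z r / ((z r - 1) * (z r - 1))) = INR n / 4.
Proof.
  rewrite (csum_ext n _ (fun _ => / 4)) by (intros; apply ccoef_sq_sub, Hz1; assumption).
  rewrite csum_const. field.
Qed.

Lemma sum_ccoef_tcoef :
  csum n (fun r => ccoef z r * csum n (tcoef z r)) = INR n * (INR n - 1) / 4.
Proof.
  rewrite (csum_ext n _ (fun r => csum n (fun j => ccoef z r * tcoef z r j)))
    by (intros; symmetry; apply csum_scal_l).
  rewrite csum_square_split, csum_zero by (intros; rewrite tcoef_diag; ring).
  rewrite (csum2_ext n _ (fun _ _ => / 2)), csum2_const; [field|].
  intros i j Hij Hj. apply ccoef_tcoef_pair; try apply Hz0; try apply Hz1; try apply Hx; lia.
Qed.

Lemma sum_tcoef_triple :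
  csum n (fun r => csum n (fun j => csum n (fun k =>
    if Nat.eqb k j then RtoC 0 else tcoef z r j * tcoef z r k))) =
  INR n * (INR n - 1) * (INR n - 2) / 3.
Proof.
  replace (INR n * (INR n - 1) * (INR n - 2) / 3)
    with (INR n * (INR n - 1) * (INR n - 2) / 6 * 2) by field.
  apply csum_cube_sym.
  - intros a b c _ _ _ Hcoinc. destruct (Nat.eqb_spec c b); [reflexivity|].
    destruct Hcoinc as [<- | [-> | <-]]; [rewrite tcoef_diag | lia | rewrite tcoef_diag]; ring.
  - intros a b c Ha Hb Hc Hab Hbc Hac.
    repeat match goal with |- context [Nat.eqb ?u ?v] =>
      destruct (Nat.eqb_spec u v); [lia|] end.
    apply tcoef_triple; auto; apply Hx; auto.
Qed.

Lemma sum_tcoef_pair :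
  mu2 * mu2 * csum n (fun r => csum n (fun j => tcoef z r j * tcoef z r j))
  + mu2 * csum n (fun r => csum n (ucoef z r))
  + 2 * mu2 * (1 - mu2) *
    (csum2 n (fun i j => z i * z j / ((z i - z j) * (z i - z j)))
     + csum2 n (fun i j => z i * z j / ((z i * z j - 1) * (z i * z j - 1))))
  = INR n * (INR n - 1) / 2 * (mu2 * mu2).
Proof.
  rewrite <- !csum_scal_l, <- csum_add, <- csum2_add, <- csum2_scal_l, <- csum2_const.
  rewrite (csum_ext n _ (fun r => csum n (fun j =>
             mu2 * mu2 * (tcoef z r j * tcoef z r j) + mu2 * ucoef z r j)))
    by (intros; rewrite csum_add, !csum_scal_l; reflexivity).
  rewrite (csum_square_split n (fun r j =>
             mu2 * mu2 * (tcoef z r j * tcoef z r j) + mu2 * ucoef z r j)).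
  rewrite csum_zero by (intros; rewrite tcoef_diag, ucoef_diag; ring).
  rewrite Cplus_0_l, <- csum2_add. apply csum2_ext. intros i j Hij Hj.
  etransitivity; [|apply (tcoef_pair mu2 z i j); [lia | apply Hz0; lia ..| apply Hx; lia]].
  ring.
Qed.

Lemma euler_rational_identity :
  csum n (fun r => acoef n mu1 mu2 z r * acoef n mu1 mu2 z r + bcoef n mu1 mu2 z r)
  + (mu1 * (1 - mu1) * csum n (fun r => z r / ((z r - 1) * (z r - 1)))
     + 2 * mu2 * (1 - mu2) *
       (csum2 n (fun i j => z i * z j / ((z i - z j) * (z i - z j)))
        + csum2 n (fun i j => z i * z j / ((z i * z j - 1) * (z i * z j - 1)))))
  = INR n * mu1 * mu1 / 4
    + INR n * (INR n - 1) / 2 * mu1 * mu2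
    + INR n * (INR n - 1) * (2 * INR n - 1) * mu2 * mu2 / 6.
Proof.
  set (q r := z r / ((z r - 1) * (z r - 1))).
  rewrite (csum_ext n _ (fun r =>
      mu1 * mu1 * (ccoef z r * ccoef z r - q r) + (mu1 * mu1 - mu1) * q r
      + 2 * mu1 * mu2 * (ccoef z r * csum n (tcoef z r))
      + mu2 * mu2 * csum n (fun j => csum n (fun k =>
          if Nat.eqb k j then RtoC 0 else tcoef z r j * tcoef z r k))
      + mu2 * mu2 * csum n (fun j => tcoef z r j * tcoef z r j)
      + mu2 * csum n (ucoef z r))).
  2:{ intros r _. unfold acoef, bcoef.
      apply (Ceq_of_sub_eq _ _ _ _ (mu2 * mu2) (csum_mul_csum n (tcoef z r))). unfold q. ring. }
  rewrite !csum_add, !csum_scal_l. unfold q.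
  rewrite sum_ccoef_sq_sub, sum_ccoef_tcoef, sum_tcoef_triple.
  apply (Ceq_of_sub_eq _ _ _ _ 1 sum_tcoef_pair). field.
Qed.

End RationalIdentity.

(** * Partial derivatives of phi^B *)

Lemma upd_eq (y : nat -> C) r w : upd y r w r = w.
Proof. unfold upd. rewrite Nat.eqb_refl. reflexivity. Qed.

Lemma upd_neq (y : nat -> C) r w k : k <> r -> upd y r w k = y k.
Proof. intros H. unfold upd. destruct (Nat.eqb_spec k r); [lia | reflexivity]. Qed.

Lemma upd_id (y : nat -> C) r : upd y r (y r) = y.
Proof.
  apply functional_extensionality. intros k. unfold upd.
  destruct (Nat.eqb_spec k r); subst; reflexivity.
Qed.

Lemma Cderive_upd (h : C -> C) (y : nat -> C) k r (dh : C) :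
  is_derive h (y r) dh -> is_derive (fun w => h (upd y k w r)) (y k) (kron k r * dh).
Proof.
  intros H. unfold kron. destruct (Nat.eqb_spec k r) as [<-|Hkr].
  - apply (Cderive_ext h); [intros; rewrite upd_eq; reflexivity|].
    eapply Cderive_eq; [exact H | ring].
  - apply (Cderive_ext (fun _ => h (y r))); [intros; rewrite upd_neq by auto; reflexivity|].
    eapply Cderive_eq; [apply Cderive_const | ring].
Qed.

Lemma Cderive_add_inv (x : C) : x <> 0 -> is_derive (fun w => w + / w) x ((x - / x) / x).
Proof.
  intros Hx. eapply Cderive_eq.
  - apply Cderive_plus; [apply Cderive_id|].
    apply (Cderive_inv_comp (fun w => w)), Hx. apply Cderive_id.
  - field. exact Hx.
Qed.

Lemma Cderive_sub_inv (x : C) : x <> 0 -> is_derive (fun w => w - / w) x ((x + / x) / x).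
Proof.
  intros Hx. eapply Cderive_eq.
  - apply Cderive_minus; [apply Cderive_id|].
    apply (Cderive_inv_comp (fun w => w)), Hx. apply Cderive_id.
  - field. exact Hx.
Qed.

Lemma acoef_upd n mu1 mu2 (z : nat -> C) r w :
  acoef n mu1 mu2 (upd z r w) r =
  mu1 * ((w + 1) / (2 * (w - 1)))
  + mu2 * csum n (fun j => if Nat.eqb j r then RtoC 0 else (w - / w) / (w + / w - xs z j)).
Proof.
  unfold acoef, ccoef. rewrite upd_eq. do 2 f_equal. apply csum_ext. intros j _.
  unfold tcoef, ws, xs. destruct (Nat.eqb_spec j r); [reflexivity|].
  rewrite upd_eq, upd_neq by assumption. reflexivity.
Qed.

Lemma is_derive_acoef n mu1 mu2 (z : nat -> C) r :
  z r <> 0 -> z r - 1 <> 0 ->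
  (forall j, (j < n)%nat -> j <> r -> xs z r - xs z j <> 0) ->
  is_derive (fun w => acoef n mu1 mu2 (upd z r w) r) (z r) (bcoef n mu1 mu2 z r / z r).
Proof.
  intros Hz0 Hz1 Hx.
  apply (Cderive_ext (fun w => mu1 * ((w + 1) / (2 * (w - 1))) + mu2 * csum n (fun j =>
           if Nat.eqb j r then RtoC 0 else (w - / w) / (w + / w - xs z j))));
    [intros; symmetry; apply acoef_upd|].
  eapply Cderive_eq.
  - apply Cderive_plus; apply Cderive_scal.
    + apply (Cderive_ext (fun w => (w + 1) * / (2 * (w - 1)))); [reflexivity|].
      apply Cderive_mult.
      * apply Cderive_plus; [apply Cderive_id | apply Cderive_const].
      * apply (Cderive_inv_comp (fun w => 2 * (w - 1))).
        -- apply Cderive_scal, Cderive_minus; [apply Cderive_id | apply Cderive_const].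
        -- apply Cmult_neq_0; [intros E; injection E; lra | exact Hz1].
    + apply (Cderive_csum n _ _ (fun j => ucoef z r j / z r)). intros j Hj.
      destruct (Nat.eqb_spec j r) as [->|Hjr].
      * eapply Cderive_eq; [apply Cderive_const|]. rewrite ucoef_diag. unfold Cdiv. ring.
      * apply (Cderive_ext (fun w => (w - / w) * / (w + / w - xs z j))); [reflexivity|].
        eapply Cderive_eq.
        -- apply Cderive_mult; [apply Cderive_sub_inv, Hz0|].
           apply (Cderive_inv_comp (fun w => w + / w - xs z j)).
           ++ apply Cderive_minus; [apply Cderive_add_inv, Hz0 | apply Cderive_const].
           ++ apply Hx; assumption.
        -- rewrite ucoef_off by assumption. fold (xs z r) (ws z r).
           pose proof (Hx j Hj Hjr). field. auto.
  - unfold bcoef.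
    replace (csum n (fun j => ucoef z r j / z r)) with (csum n (ucoef z r) / z r)
      by (unfold Cdiv; rewrite <- csum_scal_r; reflexivity).
    field. auto.
Qed.

Lemma euler_dlog_eq n mu1 mu2 (y : nat -> C) r : (r < n)%nat ->
  (forall k, (k < n)%nat -> y k <> 0) ->
  (forall i j, (i < n)%nat -> (j < n)%nat -> i <> j -> xs y i - xs y j <> 0) ->
  y r * (mu1 * csum n (fun k => kron r k * (ccoef y k / y k))
         + mu2 * csum2 n (fun i j =>
             (kron r i * (ws y i / y i) - kron r j * (ws y j / y j)) / (xs y i - xs y j)))
  = acoef n mu1 mu2 y r.
Proof.
  intros Hr Hy0 Hx.
  set (F a b := kron r a * (if Nat.eqb b a then RtoC 0 else ws y a / y a / (xs y a - xs y b))).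
  assert (Hpairs : csum2 n (fun i j =>
             (kron r i * (ws y i / y i) - kron r j * (ws y j / y j)) / (xs y i - xs y j))
           = csum n (tcoef y r) / y r).
  { transitivity (csum n (fun a => csum n (fun b => F a b))).
    - rewrite csum_square_split, Cplus_comm, csum_zero, Cplus_0_r.
      + apply csum2_ext. intros i j Hij Hj. unfold F.
        destruct (Nat.eqb_spec j i), (Nat.eqb_spec i j); try lia.
        assert (Hxij : xs y i - xs y j <> 0) by (apply Hx; lia).
        pose proof (Cminus_neq0_sym _ _ Hxij).
        pose proof (Hy0 i ltac:(lia)). pose proof (Hy0 j Hj). field. auto.
      + intros a _. unfold F. rewrite Nat.eqb_refl. ring.
    - unfold F. rewrite (csum_ext n _ (fun a => kron r a * csum n (fun b =>
          if Nat.eqb b a then RtoC 0 else ws y a / y a / (xs y a - xs y b))))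
        by (intros; apply csum_scal_l).
      rewrite csum_kron by exact Hr.
      unfold Cdiv at 3. rewrite <- csum_scal_r. apply csum_ext. intros b _.
      unfold tcoef. destruct (Nat.eqb_spec b r); [ring|]. unfold Cdiv. ring. }
  rewrite csum_kron, Hpairs by exact Hr. unfold acoef.
  pose proof (Hy0 r Hr). field. auto.
Qed.

Lemma pderiv_eq (f : (nat -> C) -> C) r y d :
  is_derive (fun w => f (upd y r w)) (y r) d -> pderiv f r y = d.
Proof.
  intros H. unfold pderiv.
  apply (Cderive_unique (fun w => f (upd y r w)) (y r)); [|exact H].
  apply (epsilon_spec (inhabits (RtoC 0))
           (fun d0 => is_derive (fun w => f (upd y r w)) (y r) d0)).
  exists d. exact H.
Qed.

Section PhiB.
Variables (n : nat) (mu1 mu2 : C) (U : (nat -> C) -> Prop)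
  (s l : nat -> (nat -> C) -> C) (m : nat -> nat -> (nat -> C) -> C).
Hypothesis HU : coord_open n U.
Hypothesis Hz : forall z, U z -> forall r, (r < n)%nat -> z r <> RtoC 0.
Hypothesis Hs : forall z, U z -> forall r, (r < n)%nat -> s r z * s r z = z r.
Hypothesis Hl : forall z, U z -> forall r, (r < n)%nat -> cexp (l r z) = s r z - / s r z.
Hypothesis Hld : forall z, U z -> forall r k, (r < n)%nat -> (k < n)%nat -> pdiff (l r) k z.
Hypothesis Hm : forall z, U z -> forall i j, (i < j)%nat -> (j < n)%nat ->
  cexp (m i j z) = z i + / z i - z j - / z j.
Hypothesis Hmd : forall z, U z -> forall i j k, (i < j)%nat -> (j < n)%nat -> (k < n)%nat ->
  pdiff (m i j) k z.

Local Notation phi := (phiB n mu1 mu2 l m).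

Lemma cexp_double_l y r : U y -> (r < n)%nat -> cexp (2 * l r y) = xs y r - 2.
Proof.
  intros Hy Hr.
  assert (Hs0 : s r y <> 0)
    by (intros E; apply (Hz y Hy r Hr); rewrite <- (Hs y Hy r Hr), E; ring).
  replace (2 * l r y) with (l r y + l r y) by ring.
  unfold xs. rewrite cexp_add, Hl, <- (Hs y Hy r Hr) by assumption. field. exact Hs0.
Qed.

Lemma xs_sub2_neq0 y r : U y -> (r < n)%nat -> xs y r - 2 <> 0.
Proof. intros Hy Hr. rewrite <- cexp_double_l by assumption. apply cexp_neq0. Qed.

Lemma sub1_neq0 y r : U y -> (r < n)%nat -> y r - 1 <> 0.
Proof.
  intros Hy Hr E. apply (xs_sub2_neq0 y r Hy Hr). unfold xs.
  replace (y r) with (RtoC 1) by (symmetry; apply Ceq_minus, E).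
  field.
Qed.

Lemma xs_neq y i j : U y -> (i < n)%nat -> (j < n)%nat -> i <> j -> xs y i - xs y j <> 0.
Proof.
  intros Hy Hi Hj Hij.
  assert (Hlt : forall a b, (a < b)%nat -> (b < n)%nat -> xs y a - xs y b <> 0).
  { intros a b Hab Hb. replace (xs y a - xs y b) with (y a + / y a - y b - / y b)
      by (unfold xs; ring).
    rewrite <- Hm by assumption. apply cexp_neq0. }
  destruct (proj1 (Nat.lt_gt_cases i j) Hij) as [H|H]; [|apply Cminus_neq0_sym]; auto.
Qed.

Lemma locally_upd y k (P : C -> Prop) : U y -> (k < n)%nat ->
  (forall w, U (upd y k w) -> P w) -> locally (y k) P.
Proof. intros Hy Hk HP. eapply filter_imp; [exact HP | exact (HU y Hy k Hk)]. Qed.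

(* Differentiating [exp (2 l_r) = x_r - 2] gives [z_r d/dz_r l_r = ccoef]. *)
Lemma is_derive_l y r k : U y -> (r < n)%nat -> (k < n)%nat ->
  is_derive (fun w => l r (upd y k w)) (y k) (kron k r * (ccoef y r / y r)).
Proof.
  intros Hy Hr Hk. destruct (Hld y Hy r k Hr Hk) as [d Hd].
  enough (Ed : d = kron k r * (ccoef y r / y r)) by (rewrite <- Ed; exact Hd).
  assert (Hg : is_derive (fun w => xs (upd y k w) r - 2) (y k) (kron k r * (ws y r / y r))).
  { apply (Cderive_upd (fun u => u + / u - 2)).
    eapply Cderive_eq; [apply Cderive_minus; [apply Cderive_add_inv, Hz | apply Cderive_const]|];
      auto.
    unfold ws. ring. }
  assert (Hloc : locally (y k) (fun w => cexp (2 * l r (upd y k w)) = xs (upd y k w) r - 2))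
    by (apply locally_upd; auto; intros w Hw; apply cexp_double_l; assumption).
  pose proof (Cderive_of_cexp_eq _ _ _ _ _ (Cderive_scal 2 _ _ _ Hd) Hg Hloc) as E.
  cbv beta in E. rewrite upd_id in E.
  pose proof (xs_sub2_neq0 y r Hy Hr). pose proof (Hz y Hy r Hr). pose proof (sub1_neq0 y r Hy Hr).
  replace d with (2 * d * (xs y r - 2) / (2 * (xs y r - 2))) by (field; auto).
  rewrite E. unfold ccoef, ws, xs. field. repeat split; auto.
  replace (y r * y r + 1 - 2 * y r) with ((y r - 1) * (y r - 1)) by ring.
  apply Cmult_neq_0; assumption.
Qed.

(* Differentiating [exp m_ij = x_i - x_j]. *)
Lemma is_derive_m y i j k : U y -> (i < j)%nat -> (j < n)%nat -> (k < n)%nat ->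
  is_derive (fun w => m i j (upd y k w)) (y k)
    ((kron k i * (ws y i / y i) - kron k j * (ws y j / y j)) / (xs y i - xs y j)).
Proof.
  intros Hy Hij Hj Hk. destruct (Hmd y Hy i j k Hij Hj Hk) as [d Hd].
  enough (Ed : d = (kron k i * (ws y i / y i) - kron k j * (ws y j / y j)) / (xs y i - xs y j))
    by (rewrite <- Ed; exact Hd).
  assert (Hg : is_derive (fun w => xs (upd y k w) i - xs (upd y k w) j) (y k)
                 (kron k i * (ws y i / y i) - kron k j * (ws y j / y j))).
  { apply Cderive_minus; apply (Cderive_upd (fun u => u + / u)), Cderive_add_inv, Hz;
      auto; lia. }
  assert (Hloc : locally (y k)
      (fun w => cexp (m i j (upd y k w)) = xs (upd y k w) i - xs (upd y k w) j)).
  { apply locally_upd; auto. intros w Hw. rewrite Hm by assumption. unfold xs. ring. }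
  pose proof (Cderive_of_cexp_eq _ _ _ _ _ Hd Hg Hloc) as E.
  cbv beta in E. rewrite upd_id in E. rewrite <- E. field. apply xs_neq; auto; lia.
Qed.

Lemma is_derive_phi y r : U y -> (r < n)%nat ->
  is_derive (fun w => phi (upd y r w)) (y r) (acoef n mu1 mu2 y r / y r * phi y).
Proof.
  intros Hy Hr. unfold phiB. eapply Cderive_eq.
  - apply Cderive_cexp_comp, Cderive_plus; apply Cderive_scal.
    + apply (Cderive_csum n (fun k w => l k (upd y r w))). intros. apply is_derive_l; assumption.
    + apply (Cderive_csum2 n (fun i j w => m i j (upd y r w))). intros.
      apply is_derive_m; auto; lia.
  - cbv beta. rewrite upd_id, <- (euler_dlog_eq n mu1 mu2 y r Hr).
    + field. apply Hz; assumption.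
    + intros. apply Hz; assumption.
    + intros. apply xs_neq; assumption.
Qed.

Lemma euler_phi y r : U y -> (r < n)%nat -> euler r phi y = acoef n mu1 mu2 y r * phi y.
Proof.
  intros Hy Hr. unfold euler. rewrite (pderiv_eq _ _ _ _ (is_derive_phi y r Hy Hr)).
  field. apply Hz; assumption.
Qed.

Lemma euler_euler_phi z r : U z -> (r < n)%nat ->
  pdiff (euler r phi) r z /\
  euler r (euler r phi) z =
  (acoef n mu1 mu2 z r * acoef n mu1 mu2 z r + bcoef n mu1 mu2 z r) * phi z.
Proof.
  intros Hz0 Hr. pose proof (Hz z Hz0 r Hr).
  assert (Hd : is_derive (fun w => euler r phi (upd z r w)) (z r)
      (bcoef n mu1 mu2 z r / z r * phi z
       + acoef n mu1 mu2 z r * (acoef n mu1 mu2 z r / z r * phi z))).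
  { apply (Cderive_ext_loc (fun w => acoef n mu1 mu2 (upd z r w) r * phi (upd z r w))).
    - apply locally_upd; auto. intros w Hw. symmetry. apply euler_phi; assumption.
    - eapply Cderive_eq; [apply Cderive_mult; [apply is_derive_acoef | apply is_derive_phi]|].
      + assumption.
      + apply sub1_neq0; assumption.
      + intros. apply xs_neq; auto.
      + assumption.
      + assumption.
      + cbv beta. rewrite upd_id. reflexivity. }
  split; [exists (bcoef n mu1 mu2 z r / z r * phi z
                  + acoef n mu1 mu2 z r * (acoef n mu1 mu2 z r / z r * phi z)); exact Hd|].
  unfold euler at 1. rewrite (pderiv_eq _ _ _ _ Hd). field. assumption.
Qed.

End PhiB.

Theorem theorem6p5 (n : nat) (mu1 mu2 : C) (U : (nat -> C) -> Prop)
  (s l : nat -> (nat -> C) -> C) (m : nat -> nat -> (nat -> C) -> C) :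
  coord_open n U ->
  (forall z, U z -> forall r, (r < n)%nat -> z r <> RtoC 0) ->
  (forall z, U z -> forall r, (r < n)%nat -> s r z * s r z = z r) ->
  (forall z, U z -> forall r, (r < n)%nat ->
     cexp (l r z) = s r z - / s r z) ->
  (forall z, U z -> forall r k, (r < n)%nat -> (k < n)%nat -> pdiff (l r) k z) ->
  (forall z, U z -> forall i j, (i < j)%nat -> (j < n)%nat ->
     cexp (m i j z) = z i + / z i - z j - / z j) ->
  (forall z, U z -> forall i j k, (i < j)%nat -> (j < n)%nat -> (k < n)%nat ->
     pdiff (m i j) k z) ->
  forall z, U z ->
    (forall r, (r < n)%nat ->
       pdiff (phiB n mu1 mu2 l m) r z /\
       pdiff (euler r (phiB n mu1 mu2 l m)) r z) /\
    csum n (fun r => euler r (euler r (phiB n mu1 mu2 l m)) z)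
    + (mu1 * (1 - mu1) * csum n (fun r => z r / ((z r - 1) * (z r - 1)))
       + 2 * mu2 * (1 - mu2) *
         (csum2 n (fun i j => z i * z j / ((z i - z j) * (z i - z j)))
          + csum2 n (fun i j => z i * z j / ((z i * z j - 1) * (z i * z j - 1)))))
      * phiB n mu1 mu2 l m z
    = (INR n * mu1 * mu1 / 4
       + INR n * (INR n - 1) / 2 * mu1 * mu2
       + INR n * (INR n - 1) * (2 * INR n - 1) * mu2 * mu2 / 6)
      * phiB n mu1 mu2 l m z.
Proof.
  intros HU Hz Hs Hl Hld Hm Hmd z Hz0.
  pose proof (euler_euler_phi n mu1 mu2 U s l m HU Hz Hs Hl Hld Hm Hmd z) as Hsecond.
  split.
  - intros r Hr. split; [|exact (proj1 (Hsecond r Hz0 Hr))].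
    eexists. exact (is_derive_phi n mu1 mu2 U s l m HU Hz Hs Hl Hld Hm Hmd z r Hz0 Hr).
  - rewrite (csum_ext n _ _ (fun r Hr => proj2 (Hsecond r Hz0 Hr))), csum_scal_r.
    rewrite <- Cmult_plus_distr_r, euler_rational_identity; [reflexivity|..].
    + intros k Hk. exact (Hz z Hz0 k Hk).
    + intros k Hk. exact (sub1_neq0 n U s l Hz Hs Hl z k Hz0 Hk).
    + intros i j Hi Hj Hij. exact (xs_neq n U m Hm z i j Hz0 Hi Hj Hij).
Qed.
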